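(* Let $n\ge 2$. The function $\mathbf{H}:[0,1]^n\to[0,1]$ has no absorbing element, i.e. there is no $a\in[0,1]$ such that $\mathbf{H}(x_1,\dots,x_{i-1},a,x_{i+1},\dots,x_n)=a$ for every $i$ and all $x_j\in[0,1]$.
   Context: For $\mathbf{x}\in[0,1]^n$ let $x_{(1)}\ge\dots\ge x_{(n)}$ be its entries in decreasing order, and define the median $Med(\mathbf{x})=\frac12(x_{(k)}+x_{(k+1)})$ if $n=2k$ and $Med(\mathbf{x})=x_{(k+1)}$ if $n=2k+1$. Define $f_i(\mathbf{x})=\frac1n$ if $x_1=\dots=x_n$, and otherwise $f_i(\mathbf{x})=\frac{1}{n-1}\Big(1-\frac{|x_i-Med(\mathbf{x})|}{\sum_{j=1}^n|x_j-Med(\mathbf{x})|}\Big)$. Then $\mathbf{H}(\mathbf{x})=\sum_{i=1}^n f_i(\mathbf{x})\,x_i$. *)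

From mathcomp Require Import all_boot all_order all_algebra.
Set Implicit Arguments. Unset Strict Implicit. Unset Printing Implicit Defensive.
Import Order.TTheory GRing.Theory Num.Theory.
Local Open Scope ring_scope.

Section HDef.
Variable R : realFieldType.

(* entries of x sorted in decreasing order: x_(1) >= ... >= x_(n);
   x_(j) (1-based) is (sorted_desc x)`_(j-1) *)
Definition sorted_desc n (x : 'I_n -> R) : seq R :=
  sort (fun a b => b <= a) [seq x i | i <- enum 'I_n].

Definition Med n (x : 'I_n -> R) : R :=
  let s := sorted_desc x in
  let k := n./2 in
  if ~~ odd n then (s`_(k.-1) + s`_k) / 2%:R else s`_k.

Definition all_equal n (x : 'I_n -> R) : bool :=
  [forall i, forall j, x i == x j].

Definition f_weight n (x : 'I_n -> R) (i : 'I_n) : R :=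
  if all_equal x then n%:R^-1
  else (n.-1)%:R^-1 *
       (1 - `|x i - Med x| / \sum_(j < n) `|x j - Med x|).

Definition H n (x : 'I_n -> R) : R := \sum_(i < n) f_weight x i * x i.

End HDef.

Definition in01 (R : realFieldType) (a : R) : bool := (0 <= a) && (a <= 1).

From mathcomp Require Import all_boot all_order all_algebra.
From mathcomp Require Import ring lra.
Set Implicit Arguments. Unset Strict Implicit. Unset Printing Implicit Defensive.
Import Order.TTheory GRing.Theory Num.Theory.
Local Open Scope ring_scope.

(* For n >= 2 the weights f_i always sum to 1, and the weight of a coordinate
   that differs from the others stays below 1: for n >= 3 because it is at most
   1/(n-1), for n = 2 because such a coordinate is never the median.  Hence on
   x = (a, b, ..., b) with b <> a we get H(x) - a = (1 - f_1(x)) (b - a) <> 0,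
   so no a can be absorbing. *)

Section Weights.
Variable R : realFieldType.

Lemma Med_ord2 (x : 'I_2 -> R) : Med x = (x ord0 + x ord_max) / 2%:R.
Proof.
have size_s : size (sorted_desc x) = 2%N.
  by rewrite /sorted_desc size_sort size_map size_enum_ord.
have sum_s : \sum_(y <- sorted_desc x) y = \sum_(i < 2) x i.
  by rewrite /sorted_desc (perm_big _ (permEl (perm_sort _ _))) big_map big_enum.
rewrite /Med /=; congr (_ / _).
move: size_s sum_s; case: (sorted_desc x) => [|u [|v [|w s]]] // _.
rewrite !big_cons big_nil /= addr0 => ->; rewrite big_ord_recr big_ord1.
by congr (x _ + _); apply/val_inj.
Qed.

Lemma sum_dist_Med_gt0 n (x : 'I_n -> R) :
  ~~ all_equal x -> 0 < \sum_(j < n) `|x j - Med x|.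
Proof.
move=> neq; rewrite lt_def sumr_ge0 // andbT; apply: contra neq => /eqP S0.
have xM j : x j = Med x.
  by apply/eqP; rewrite -subr_eq0 -normr_eq0; apply/eqP/(psumr_eq0P _ S0).
by apply/forallP => i; apply/forallP => j; rewrite !xM.
Qed.

Lemma sum_f_weight n (x : 'I_n -> R) : (1 < n)%N -> \sum_(i < n) f_weight x i = 1.
Proof.
move=> n_gt1; have n_gt0 := ltnW n_gt1.
rewrite /f_weight; case: (boolP (all_equal x)) => [_|neq].
  by rewrite sumr_const card_ord -[_ *+ n]mulr_natr mulVf ?pnatr_eq0 -?lt0n.
have S_gt0 := sum_dist_Med_gt0 neq.
rewrite -mulr_sumr sumrB sumr_const card_ord -mulr_suml divff ?gt_eqF //.
have -> : n%:R = n.-1%:R + 1 :> R by rewrite natr1 prednK.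
by rewrite addrK mulVf // pnatr_eq0 -lt0n -ltnS prednK.
Qed.

Lemma all_equal_ord2 (x : 'I_2 -> R) : all_equal x = (x ord0 == x ord_max).
Proof.
apply/idP/eqP => [/forallP/(_ ord0)/forallP/(_ ord_max)/eqP // | x01].
have x_const (j : 'I_2) : x j = x ord0.
  by case: j => [[|[|//]] j2]; [|rewrite x01]; congr x; apply/val_inj.
by apply/forallP => j; apply/forallP => k; rewrite !x_const.
Qed.

Lemma f_weight_ord2_lt1 (x : 'I_2 -> R) (i : 'I_2) :
  ~~ all_equal x -> f_weight x i < 1.
Proof.
rewrite all_equal_ord2 => x01; rewrite /f_weight all_equal_ord2 (negbTE x01).
have S_gt0 : 0 < \sum_(j < 2) `|x j - Med x|.
  by apply: sum_dist_Med_gt0; rewrite all_equal_ord2.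
rewrite invr1 mul1r gtrBl divr_gt0 // normr_gt0 subr_eq0 Med_ord2.
have [-> | ->] : i = ord0 \/ i = ord_max.
  by case: i => [[|[|//]] ?]; [left | right]; apply/val_inj.
all: by apply: contra x01 => /eqP xM; apply/eqP; lra.
Qed.

Lemma f_weight_le_inv n (x : 'I_n -> R) (i : 'I_n) :
  ~~ all_equal x -> f_weight x i <= n.-1%:R^-1.
Proof.
move=> neq; rewrite /f_weight (negbTE neq) ler_piMr ?invr_ge0 // gerBl.
by rewrite divr_ge0 // ltW // sum_dist_Med_gt0.
Qed.

Lemma f_weight_lt1 n (x : 'I_n -> R) (i : 'I_n) :
  (1 < n)%N -> ~~ all_equal x -> f_weight x i < 1.
Proof.
case: n x i => [|[|[|m]]] // x i _ neq; first exact: f_weight_ord2_lt1.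
by apply: le_lt_trans (f_weight_le_inv i neq) _; rewrite invf_lt1 ?ltr0n // ltr1n.
Qed.

Lemma H_sub_two_valued n (x : 'I_n -> R) (i : 'I_n) (b : R) :
  (1 < n)%N -> (forall k, k != i -> x k = b) ->
  H x - x i = (1 - f_weight x i) * (b - x i).
Proof.
move=> n_gt1 xb.
have rest : \sum_(k < n | k != i) f_weight x k = 1 - f_weight x i.
  by rewrite -(sum_f_weight x n_gt1) [in RHS](bigD1 i) //= addrC addrK.
rewrite /H (bigD1 i) //= (eq_bigr (fun k => f_weight x k * b)) => [|k /xb -> //].
by rewrite -mulr_suml rest; ring.
Qed.

End Weights.

Theorem proposition13 (R : realFieldType) (n : nat) (hn : (2 <= n)%N) :
  ~ (exists a : R, in01 a /\
       forall (i : 'I_n) (x : 'I_n -> R),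
         (forall j, in01 (x j)) -> x i = a -> H x = a).
Proof.
case: n hn => [|[|m]] // n_gt1 [a [a01 absorbing]].
pose b : R := if a == 0 then 1 else 0.
have b01 : in01 b by rewrite /b /in01; case: (a == 0); rewrite ?ler01 ?lexx.
have ab : a != b by rewrite /b; case: (eqVneq a 0) => [->|] //; rewrite eq_sym oner_eq0.
pose x (k : 'I_m.+2) := if k == ord0 then a else b.
have x0 : x ord0 = a by rewrite /x eqxx.
have xb k : k != ord0 -> x k = b by rewrite /x => /negbTE ->.
have neq : ~~ all_equal x.
  apply/negP => /forallP /(_ ord0) /forallP /(_ (lift ord0 ord0)) /eqP.
  by rewrite x0 xb //; apply/eqP.
have Hx : H x = a by apply: (absorbing ord0) => // k; rewrite /x; case: ifP.
have := H_sub_two_valued n_gt1 xb; rewrite Hx x0 subrr => /esym/eqP.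
by rewrite mulf_eq0 !subr_eq0 (gt_eqF (f_weight_lt1 _ n_gt1 neq)) eq_sym (negbTE ab).
Qed.
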